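(* Assume that for every $k\ge1$ the function $\hat{\mathcal L}(\cdot,y_k)$ is convex, that $\tau_1\tau_2\|K\|^2\le1/4$ and $\tau_1\le1/(4L)$, and let $(x_*,y_* )$ be a saddle point of $\Phi$. Set \[\Delta_0:=\frac{\|x_*-x_0\|^2}{2\tau_1}+\frac{\|y_*-y_0\|^2}{2\tau_2}.\] Then for every $N\ge1$ there exists $k_0\le N$ such that \[r^y_{k_0}\in\partial\big[-\hat{\mathcal L}(x_{k_0},\cdot)+h_2\big](y_{k_0}),\qquad r^x_{k_0}\in\partial_{\varepsilon_{k_0}}\big[\hat{\mathcal L}(\cdot,y_{k_0})+h_1\big](x_{k_0}),\] and \[\|r^y_{k_0}\|\le\frac{\sqrt{3\Delta_0}}{\sqrt{\tau_2N}},\qquad\|r^x_{k_0}\|\le\frac{2\sqrt{\Delta_0}}{\sqrt{\tau_1N}},\qquad\varepsilon_{k_0}\le\frac{\Delta_0}{2N},\] where $r^y_k:=(y^{k-1}-y^k)/\tau_2$, $r^x_k:=(x_{k-1}-x_k)/\tau_1$ and $\varepsilon_k:=\hat{\mathcal L}(x_k,y_k)-\ell_{\hat{\mathcal L}(\cdot,y_k)}(x_k;x_{k-1})$.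
   Context: Let $n,m_1,m_2$ be positive integers, $Q\in\mathbb R^{n\times n}$ symmetric, $c\in\mathbb R^n$, $A\in\mathbb R^{m_1\times n}$, $b\in\mathbb R^{m_1}$, $B\in\mathbb R^{m_2\times n}$, $d\in\mathbb R^{m_2}$. Let $K:=-\begin{pmatrix}A\\ B\end{pmatrix}$ and $r:=(b;d)$. Fix $\rho\ge0$ and let $\mathbf 1$ be the all-ones vector. Define $\hat{\mathcal L}(x,y):=\langle x,Qx\rangle+\langle c,x\rangle+\langle y,Kx+r\rangle+\rho\langle x,\mathbf 1-x\rangle$, with $\nabla_x\hat{\mathcal L}(x,y)=c+\rho\mathbf 1+K^\top y+2Qx-2\rho x$, $\nabla_y\hat{\mathcal L}(x,y)=Kx+r$. Let $Y:=\mathbb R_+^{m_1}\times\mathbb R^{m_2}$, $h_1$ the indicator of $[0,1]^n$, $h_2$ the indicator of $Y$ ($0$ on the set, $+\infty$ outside), $\Phi(x,y):=\hat{\mathcal L}(x,y)+h_1(x)-h_2(y)$. A saddle point $(x_*,y_* )$ satisfies $\Phi(x_*,y)\le\Phi(x_*,y_* )\le\Phi(x,y_* )$ for all $x,y$. $L:=2(\|Q\|+\rho)$ with spectral norm. For differentiable $f$, $\ell_f(x;x'):=f(x')+\langle\nabla f(x'),x-x'\rangle$. For convex $g$, $\partial g$ is the subdifferential and $\partial_\varepsilon g(x):=\{v:g(z)\ge g(x)+\langle v,z-x\rangle-\varepsilon\ \forall z\}$. PDHG iterates with $\tau_1,\tau_2>0$: $x_0\in[0,1]^n$, $y_0\in\mathbb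 R^{m_1+m_2}$, $x_{-1}:=x_0$, $\bar x_0:=x_0$, and for $k\ge1$: $y_k=\Pi_Y(y_{k-1}+\tau_2(K\bar x_{k-1}+r))$, $x_k=\Pi_{[0,1]^n}(x_{k-1}-\tau_1\nabla_x\hat{\mathcal L}(x_{k-1},y_k))$, $\bar x_k=2x_k-x_{k-1}$ ($\Pi$ = Euclidean projection). Also $y^0:=y_0$ and $y^k:=y_k+\tau_2K(\bar x_k-x_k)$ for $k\ge1$. *)

From HB Require Import structures.
From mathcomp Require Import all_boot all_order all_algebra.
From mathcomp Require Import all_classical all_reals all_analysis.
Set Implicit Arguments. Unset Strict Implicit. Unset Printing Implicit Defensive.
Import Order.TTheory GRing.Theory Num.Theory.
Local Open Scope ring_scope.
Local Open Scope classical_set_scope.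

Section Defs.
Context {R : realType}.

Definition dotv {n} (u v : 'cV[R]_n) : R := \sum_(i < n) u i 0 * v i 0.
Definition vnorm {n} (u : 'cV[R]_n) : R := Num.sqrt (dotv u u).

Definition opnorm {m n} (M : 'M[R]_(m, n)) : R :=
  sup [set vnorm (M *m u) | u in [set u : 'cV[R]_n | vnorm u <= 1]].

Local Unset Implicit Arguments.
Definition box (n : nat) : set 'cV[R]_n := [set u | forall i, 0 <= u i 0 <= 1].
Definition Yset (m1 m2 : nat) : set 'cV[R]_(m1 + m2) :=
  [set v | forall i : 'I_m1, 0 <= v (lshift m2 i) 0].

Local Set Implicit Arguments.
Definition ext_indic {T} (C : set T) (u : T) : \bar R :=
  if `[< C u >] then 0%E else +oo%E.

Definition is_proj {n} (C : set 'cV[R]_n) (v p : 'cV[R]_n) : Prop :=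
  C p /\ forall z, C z -> vnorm (p - v) <= vnorm (z - v).

Variables (n m1 m2 : nat) (Q : 'M[R]_n) (c : 'cV[R]_n) (A : 'M[R]_(m1, n))
  (b : 'cV[R]_m1) (B : 'M[R]_(m2, n)) (d : 'cV[R]_m2) (rho : R).

Definition Kmat : 'M[R]_(m1 + m2, n) := - col_mx A B.
Definition rvec : 'cV[R]_(m1 + m2) := col_mx b d.
Definition ones : 'cV[R]_n := const_mx 1.

Definition Lhat (u : 'cV[R]_n) (v : 'cV[R]_(m1 + m2)) : R :=
  dotv u (Q *m u) + dotv c u + dotv v (Kmat *m u + rvec) + rho * dotv u (ones - u).

Definition gradx (u : 'cV[R]_n) (v : 'cV[R]_(m1 + m2)) : 'cV[R]_n :=
  c + rho *: ones + Kmat^T *m v + 2%:R *: (Q *m u) - (2%:R * rho) *: u.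

Definition Phi (u : 'cV[R]_n) (v : 'cV[R]_(m1 + m2)) : \bar R :=
  ((Lhat u v)%:E + ext_indic (box n) u - ext_indic (Yset m1 m2) v)%E.

Definition Lconst : R := 2%:R * (opnorm Q + rho).

End Defs.

Section Defs2.
Context {R : realType}.

Definition saddle {U V} (F : U -> V -> \bar R) (us : U) (vs : V) : Prop :=
  (forall v, F us v <= F us vs)%E /\ (forall u, F us vs <= F u vs)%E.

Definition linz {n} (f : 'cV[R]_n -> R) (gf : 'cV[R]_n -> 'cV[R]_n)
  (u u' : 'cV[R]_n) : R := f u' + dotv (gf u') (u - u').

Definition convex_fun {n} (f : 'cV[R]_n -> R) : Prop :=
  forall u w (t : R), 0 <= t <= 1 ->
    f (t *: u + (1 - t) *: w) <= t * f u + (1 - t) * f w.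

Definition eps_subdiff {n} (g : 'cV[R]_n -> \bar R) (eps : R) (u v : 'cV[R]_n) : Prop :=
  forall z, (g u + (dotv v (z - u) - eps)%:E <= g z)%E.
Definition subdiff {n} (g : 'cV[R]_n -> \bar R) (u v : 'cV[R]_n) : Prop :=
  eps_subdiff g 0 u v.

(* extrapolation xbar_k = 2 x_k - x_{k-1}, with x_{-1} := x_0 (so xbar_0 = x_0) *)
Definition xbar {n} (x : nat -> 'cV[R]_n) (k : nat) : 'cV[R]_n :=
  2%:R *: x k - x k.-1.

Definition yup {n m} (K : 'M[R]_(m, n)) (tau2 : R) (x : nat -> 'cV[R]_n)
  (y : nat -> 'cV[R]_m) (k : nat) : 'cV[R]_m :=
  if k == 0%N then y 0%N else y k + tau2 *: (K *m (xbar x k - x k)).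

End Defs2.

From HB Require Import structures.
From mathcomp Require Import all_boot all_order all_algebra.
From mathcomp Require Import all_classical all_reals all_analysis.
From mathcomp Require Import ring lra.
Set Implicit Arguments. Unset Strict Implicit. Unset Printing Implicit Defensive.
Import Order.TTheory GRing.Theory Num.Theory.
Local Open Scope ring_scope.
Local Open Scope classical_set_scope.

(** Each residual certifies one projection step. Since [Lhat] is affine in [y],
    the projection defining [y_k] makes [r^y_k] an exact subgradient of
    [-Lhat(x_k, .) + h_2]. Since [Lhat(., y)] is its linearization plus the
    quadratic form [Lquad h = <h, Q h> - rho |h|^2], which does not depend on [y],
    is nonnegative by convexity and is at most [||Q|| |h|^2], the projection
    defining [x_k] makes [r^x_k] an [eps_k]-subgradient with
    [eps_k = Lquad (x_k - x_{k-1})].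

    Testing both inclusions at the saddle point and polarizing the inner
    products shows that the energy
    [E_k = |x_* - x_k|^2 / (2 tau1) + |y_* - y^k|^2 / (2 tau2)] drops at step [k]
    by at least [tau1 |r^x_k|^2 / 2 + tau2 |r^y_k|^2 / 2
    - tau1 tau2 <r^y_k, K r^x_k> - eps_k]. Absorbing the coupling term by AM-GM
    (using [tau1 tau2 ||K||^2 <= 1/4]) and [eps_k] (using [||Q|| tau1 <= 1/8])
    leaves a drop of at least [tau1 |r^x_k|^2 / 4] and [tau2 |r^y_k|^2 / 3].
    Since [E_0 = Delta0] and [E >= 0], some [k <= N] has a drop of at most
    [Delta0 / N], which yields the three bounds. *)

Section RealFacts.
Context {R : realType}.
Implicit Types (a b c t : R).

Lemma ge0_of_ge0_addrM a b : 0 <= b -> (forall t, 0 < t <= 1 -> 0 <= a + t * b) -> 0 <= a.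
Proof.
move=> b_ge0 ge0_at; rewrite leNgt; apply/negP => a_lt0.
pose t := - a / (b - a).
have t_gt0 : 0 < t by rewrite divr_gt0 //; lra.
have t_le1 : t <= 1 by rewrite ler_pdivrMr; lra.
have : 0 <= a + t * b by apply: ge0_at; rewrite t_gt0 t_le1.
have -> : a + t * b = - (a ^+ 2) / (b - a) by rewrite /t; field; lra.
rewrite pmulr_lge0 ?invr_gt0; last by lra.
by rewrite oppr_ge0 leNgt exprn_even_gt0 //= lt_eqF.
Qed.

Lemma sqr_le_of_quadratic_ge0 a b c : 0 <= c ->
  (forall t, 0 <= a + 2 * t * b + t ^+ 2 * c) -> b ^+ 2 <= a * c.
Proof.
move=> c_ge0 quad_ge0; have [c0|c_neq0] := eqVneq c 0.
  have [b0|b_neq0] := eqVneq b 0; first by rewrite b0 c0; lra.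
  have := quad_ge0 (- (a + 1) / (2 * b)); rewrite c0 mulr0 addr0.
  have -> : 2 * (- (a + 1) / (2 * b)) * b = - (a + 1) by field.
  lra.
have c_gt0 : 0 < c by rewrite lt_def c_neq0 c_ge0.
have := quad_ge0 (- b / c).
have -> : a + 2 * (- b / c) * b + (- b / c) ^+ 2 * c = (a * c - b ^+ 2) / c by field.
by rewrite pmulr_lge0 ?invr_gt0 // subr_ge0.
Qed.

Lemma le_sqrt_div a b c t : 0 <= a -> 0 < b -> 0 < t ->
  b * a ^+ 2 <= c / t -> a <= Num.sqrt c / Num.sqrt (b * t).
Proof.
move=> a_ge0 b_gt0 t_gt0; rewrite ler_pdivlMr // => le_c.
have bt_gt0 : 0 < b * t by rewrite mulr_gt0.
rewrite ler_pdivlMr ?sqrtr_gt0 // -(ger0_norm a_ge0) -sqrtr_sqr -sqrtrM ?sqr_ge0 //.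
have c_ge0 : 0 <= c := le_trans (mulr_ge0 (mulr_ge0 (ltW b_gt0) (sqr_ge0 a)) (ltW t_gt0)) le_c.
by rewrite ler_sqrt //; lra.
Qed.

Lemma le_add_of_sqr_le_4M t a b : 0 <= a -> 0 <= b -> t ^+ 2 <= 4 * a * b -> t <= a + b.
Proof. by move=> a_ge0 b_ge0 le_t; have := sqr_ge0 (a - b); nra. Qed.

Lemma descent_bounds p s t e D : 0 <= p -> 0 <= s -> t ^+ 2 <= p * s / 4 ->
  e <= p / 8 -> p / 2 + s / 2 - t - e <= D -> p <= 4 * D /\ s <= 3 * D.
Proof.
move=> p_ge0 s_ge0 le_t le_e le_D.
have t_le1 : t <= p / 8 + s / 2 by apply: le_add_of_sqr_le_4M; lra.
have t_le2 : t <= 3 * p / 8 + s / 6 by apply: le_add_of_sqr_le_4M; lra.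
by split; lra.
Qed.

Lemma exists_small_decrement (E : nat -> R) C N : (0 < N)%N ->
  (forall k, 0 <= E k) -> E 0%N <= C ->
  exists2 k, (1 <= k <= N)%N & E k.-1 - E k <= C / N%:R.
Proof.
move=> N_gt0 E_ge0 E0_le; apply: contrapT => no_small.
have large k : (0 <= k < N)%N -> C / N%:R < E k - E k.+1.
  case/andP=> _ kN; rewrite ltNge; apply/negP => le_k.
  by apply: no_small; exists k.+1; rewrite ?kN.
have := ltr_sum_nat N_gt0 large.
rewrite sumr_const_nat subn0 -(mulr_natr (C / N%:R)) divfK ?pnatr_eq0 -?lt0n //.
have -> : \sum_(0 <= k < N) (E k - E k.+1) = E 0%N - E N.
  rewrite -opprB -(telescope_sumr _ (leq0n N)) -sumrN.
  by apply: eq_bigr => k _; rewrite opprB.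
by have := E_ge0 N; lra.
Qed.

End RealFacts.

Section InnerProduct.
Context {R : realType}.
Implicit Types (a : R).

Lemma dotvC n (u v : 'cV[R]_n) : dotv u v = dotv v u.
Proof. by apply: eq_bigr => i _; rewrite mulrC. Qed.

Lemma dotvDl n (u v w : 'cV[R]_n) : dotv (u + v) w = dotv u w + dotv v w.
Proof. by rewrite /dotv -big_split; apply: eq_bigr => i _; rewrite mxE mulrDl. Qed.

Lemma dotvZl n a (u w : 'cV[R]_n) : dotv (a *: u) w = a * dotv u w.
Proof. by rewrite /dotv mulr_sumr; apply: eq_bigr => i _; rewrite mxE mulrA. Qed.

Lemma dotvNl n (u w : 'cV[R]_n) : dotv (- u) w = - dotv u w.
Proof. by rewrite -scaleN1r dotvZl mulN1r. Qed.

Lemma dotvBl n (u v w : 'cV[R]_n) : dotv (u - v) w = dotv u w - dotv v w.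
Proof. by rewrite dotvDl dotvNl. Qed.

Lemma dotvDr n (u v w : 'cV[R]_n) : dotv w (u + v) = dotv w u + dotv w v.
Proof. by rewrite dotvC dotvDl !(dotvC w). Qed.

Lemma dotvZr n a (u w : 'cV[R]_n) : dotv w (a *: u) = a * dotv w u.
Proof. by rewrite dotvC dotvZl dotvC. Qed.

Lemma dotvNr n (u w : 'cV[R]_n) : dotv w (- u) = - dotv w u.
Proof. by rewrite dotvC dotvNl dotvC. Qed.

Lemma dotvBr n (u v w : 'cV[R]_n) : dotv w (u - v) = dotv w u - dotv w v.
Proof. by rewrite dotvDr dotvNr. Qed.

Lemma dotv_mulmx m n (M : 'M[R]_(m, n)) (u : 'cV[R]_m) (v : 'cV[R]_n) :
  dotv u (M *m v) = dotv (M^T *m u) v.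
Proof.
rewrite /dotv; under eq_bigr do rewrite mxE mulr_sumr.
under [RHS]eq_bigr do rewrite mxE mulr_suml.
rewrite exchange_big; apply: eq_bigr => i _; apply: eq_bigr => j _.
by rewrite mxE mulrCA mulrA.
Qed.

Lemma dotv_ge0 n (u : 'cV[R]_n) : 0 <= dotv u u.
Proof. by apply: sumr_ge0 => i _; rewrite -expr2 sqr_ge0. Qed.

Lemma vnorm_ge0 n (u : 'cV[R]_n) : 0 <= vnorm u.
Proof. exact: sqrtr_ge0. Qed.

Lemma vnorm_sqr n (u : 'cV[R]_n) : vnorm u ^+ 2 = dotv u u.
Proof. by rewrite sqr_sqrtr // dotv_ge0. Qed.

Lemma vnormZ n a (u : 'cV[R]_n) : vnorm (a *: u) = `|a| * vnorm u.
Proof. by rewrite /vnorm dotvZl dotvZr mulrA -expr2 sqrtrM ?sqr_ge0 // sqrtr_sqr. Qed.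

Lemma cauchy_schwarz n (u v : 'cV[R]_n) : dotv u v ^+ 2 <= dotv u u * dotv v v.
Proof.
apply: sqr_le_of_quadratic_ge0 => [|t]; first exact: dotv_ge0.
have := dotv_ge0 (u + t *: v).
by rewrite !(dotvDl, dotvDr, dotvZl, dotvZr) (dotvC v u); lra.
Qed.

Lemma dotv_le_vnorm n (u v : 'cV[R]_n) : dotv u v <= vnorm u * vnorm v.
Proof.
apply: le_trans (ler_norm _) _; rewrite -sqrtr_sqr -sqrtrM ?dotv_ge0 //.
by rewrite ler_sqrt ?cauchy_schwarz // mulr_ge0 ?dotv_ge0.
Qed.

Lemma dotv_scaled_polar n tau (u v w : 'cV[R]_n) : tau != 0 ->
  dotv (tau^-1 *: (u - v)) (w - v) = tau * vnorm (tau^-1 *: (u - v)) ^+ 2 / 2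
    + vnorm (w - v) ^+ 2 / (2 * tau) - vnorm (w - u) ^+ 2 / (2 * tau).
Proof.
move=> tau_neq0; rewrite !vnorm_sqr !(dotvZl, dotvZr).
have -> : w - u = (w - v) - (u - v) by rewrite opprB addrA subrK.
move: (u - v) (w - v) => a b.
by rewrite !(dotvBl, dotvBr) (dotvC b a); field.
Qed.

End InnerProduct.

Section OperatorNorm.
Context {R : realType}.
Variables (m n : nat) (M : 'M[R]_(m, n)).

Lemma vnorm_mulmx_bounded : exists2 C, 0 <= C & forall u, vnorm (M *m u) <= C * vnorm u.
Proof.
pose F := \sum_(i < m) dotv (row i M)^T (row i M)^T.
have F_ge0 : 0 <= F by apply: sumr_ge0 => i _; apply: dotv_ge0.
exists (Num.sqrt F) => [|u]; first exact: sqrtr_ge0.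
rewrite /vnorm -sqrtrM // ler_sqrt; last by rewrite mulr_ge0 ?dotv_ge0.
rewrite /F mulr_suml /dotv; apply: ler_sum => i _.
have -> : (M *m u) i 0 = dotv (row i M)^T u.
  by rewrite /dotv mxE; apply: eq_bigr => j _; rewrite !mxE.
by rewrite -expr2 cauchy_schwarz.
Qed.

Lemma vnorm_mulmx_le u : vnorm (M *m u) <= opnorm M * vnorm u.
Proof.
have [C C_ge0 le_C] := vnorm_mulmx_bounded.
set E := [set vnorm (M *m w) | w in [set w | vnorm w <= 1]].
have E_ub : has_ubound E.
  exists C => _ [w /= w_le1 <-]; apply: le_trans (le_C w) _.
  by rewrite -[leRHS]mulr1 ler_wpM2l.
have [u0|u_neq0] := eqVneq (vnorm u) 0.
  by apply: le_trans (le_C u) _; rewrite u0 !mulr0.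
have u_gt0 : 0 < vnorm u by rewrite lt_def u_neq0 vnorm_ge0.
have unit_u : vnorm ((vnorm u)^-1 *: u) = 1.
  by rewrite vnormZ ger0_norm ?invr_ge0 ?vnorm_ge0 // mulVf.
have E_u : E (vnorm (M *m ((vnorm u)^-1 *: u))).
  by exists ((vnorm u)^-1 *: u) => //=; rewrite unit_u.
have := ub_le_sup E_ub E_u.
rewrite -scalemxAr vnormZ ger0_norm ?invr_ge0 ?vnorm_ge0 //.
by rewrite ler_pdivrMl // mulrC.
Qed.

End OperatorNorm.

Section Projection.
Context {R : realType}.

Definition segment_closed n (C : set 'cV[R]_n) :=
  forall u w t, C u -> C w -> 0 <= t <= 1 -> C (u + t *: (w - u)).

Lemma is_proj_dotv_le0 n (C : set 'cV[R]_n) v p z :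
  segment_closed C -> is_proj C v p -> C z -> dotv (v - p) (z - p) <= 0.
Proof.
move=> C_seg [Cp p_min] Cz; rewrite -oppr_ge0 -dotvNl opprB.
suff : 0 <= 2 * dotv (p - v) (z - p) by rewrite pmulr_rge0.
apply: (ge0_of_ge0_addrM (dotv_ge0 (z - p))) => t /andP[t_gt0 t_le1].
have t01 : 0 <= t <= 1 by rewrite (ltW t_gt0) t_le1.
have := p_min _ (C_seg _ _ t Cp Cz t01).
rewrite /vnorm ler_sqrt ?dotv_ge0 // addrAC.
move: (p - v) (z - p) => a b.
rewrite !(dotvDl, dotvDr, dotvZl, dotvZr) (dotvC b a) => le_sq.
have : 0 <= t * (2 * dotv a b + t * dotv b b) by lra.
by rewrite pmulr_rge0.
Qed.

Lemma box_segment_closed n : segment_closed (box n).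
Proof.
move=> u w t u_box w_box /andP[t_ge0 t_le1] i; rewrite !mxE.
have /andP[u0 u1] := u_box i; have /andP[w0 w1] := w_box i.
by apply/andP; split; nra.
Qed.

Lemma Yset_segment_closed m1 m2 : segment_closed (Yset m1 m2).
Proof.
move=> u w t u_Y w_Y /andP[t_ge0 t_le1] i; rewrite !mxE.
by have := u_Y i; have := w_Y i; nra.
Qed.

Lemma box0 n : box n (0 : 'cV[R]_n).
Proof. by move=> i; rewrite mxE lexx ler01. Qed.

Lemma Yset0 m1 m2 : Yset m1 m2 (0 : 'cV[R]_(m1 + m2)).
Proof. by move=> i; rewrite mxE. Qed.

End Projection.

Section Indicator.
Context {R : realType}.

Lemma ext_indicT T (C : set T) u : C u -> ext_indic (R:=R) C u = 0%E.
Proof. by move=> Cu; rewrite /ext_indic asboolT. Qed.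

Lemma ext_indicF T (C : set T) u : ~ C u -> ext_indic (R:=R) C u = +oo%E.
Proof. by move=> Cu; rewrite /ext_indic asboolF. Qed.

Lemma eps_subdiff_add_indic n (f : 'cV[R]_n -> R) (C : set 'cV[R]_n) eps u v :
  C u -> (forall z, C z -> f u + dotv v (z - u) - eps <= f z) ->
  eps_subdiff (fun z => (f z)%:E + ext_indic C z)%E eps u v.
Proof.
move=> Cu f_ge z; rewrite ext_indicT // adde0.
have [Cz|Cz] := pselect (C z); last by rewrite ext_indicF // addey // leey.
by rewrite ext_indicT // adde0 -EFinD lee_fin addrA f_ge.
Qed.

End Indicator.

Section Lagrangian.
Context {R : realType}.
Variables (n m1 m2 : nat) (Q : 'M[R]_n) (c : 'cV[R]_n) (A : 'M[R]_(m1, n))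
  (b : 'cV[R]_m1) (B : 'M[R]_(m2, n)) (d : 'cV[R]_m2) (rho : R).
Hypothesis QT : Q^T = Q.

Local Notation L := (Lhat Q c A b B d rho).
Local Notation G := (gradx Q c A B rho).

Definition Lquad (h : 'cV[R]_n) : R := dotv h (Q *m h) - rho * dotv h h.

Lemma Lhat_expand u h v : L (u + h) v = L u v + dotv (G u v) h + Lquad h.
Proof.
have Q_sym w z : dotv (Q *m w) z = dotv (Q *m z) w by rewrite dotvC dotv_mulmx QT.
rewrite /Lhat /gradx /Lquad !mulmxDr.
rewrite !(dotvDl, dotvDr, dotvNl, dotvNr, dotvZl, dotvZr) !dotv_mulmx QT.
by rewrite (Q_sym h u) (dotvC (ones n) h) (dotvC h u); ring.
Qed.

Lemma Lquad_ge0_of_convex v : convex_fun (fun u => L u v) -> forall h, 0 <= Lquad h.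
Proof.
move=> L_convex h.
have half01 : 0 <= (2^-1 : R) <= 1 by rewrite invr_ge0 ler0n invf_le1 ?ler1n ?ltr0n.
have := L_convex h (- h) 2^-1 half01.
have -> : 2^-1 *: h + (1 - 2^-1) *: - h = 0 :> 'cV[R]_n.
  by apply/matrixP => i j; rewrite !mxE; field.
have Lquad_opp : Lquad (- h) = Lquad h by rewrite /Lquad mulmxN !dotvNl !dotvNr !opprK.
have := Lhat_expand 0 h v; have := Lhat_expand 0 (- h) v.
rewrite !add0r Lquad_opp dotvNr => -> ->; lra.
Qed.

Lemma Lhat_sub_linz u u' v :
  L u v - linz (fun w => L w v) (fun w => G w v) u u' = Lquad (u - u').
Proof. by rewrite /linz -{1}(subrKC u' u) Lhat_expand; ring. Qed.

Lemma Lquad_le_opnorm h : 0 <= rho -> Lquad h <= opnorm Q * vnorm h ^+ 2.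
Proof.
move=> rho_ge0; rewrite /Lquad.
have := dotv_le_vnorm h (Q *m h).
have := ler_wpM2l (vnorm_ge0 h) (vnorm_mulmx_le Q h).
have := mulr_ge0 rho_ge0 (dotv_ge0 h).
rewrite -vnorm_sqr; lra.
Qed.

Lemma proj_step_y_ineq tau2 xk yk yp xb : 0 < tau2 ->
  is_proj (Yset m1 m2) (yp + tau2 *: (Kmat A B *m xb + rvec b d)) yk ->
  forall z, Yset m1 m2 z ->
  dotv (tau2^-1 *: (yp - yk) + Kmat A B *m (xb - xk)) (z - yk) <= L xk yk - L xk z.
Proof.
move=> tau2_gt0 yk_proj z z_Y.
have vi := is_proj_dotv_le0 (@Yset_segment_closed R m1 m2) yk_proj z_Y.
set w := yp + _ in vi *.
have -> : tau2^-1 *: (yp - yk) + Kmat A B *m (xb - xk) =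
          tau2^-1 *: (w - yk) - (Kmat A B *m xk + rvec b d).
  rewrite /w mulmxBr; move: (Kmat A B *m xb) (Kmat A B *m xk) (rvec b d) => a1 a2 a3.
  by apply/matrixP => i j; rewrite !mxE; field; rewrite gt_eqF.
rewrite dotvBl dotvZl /Lhat [dotv (_ + rvec b d) _]dotvBr (dotvC z) (dotvC yk).
have inv_ge0 : 0 <= tau2^-1 by rewrite invr_ge0 ltW.
have := mulr_ge0_le0 inv_ge0 vi; lra.
Qed.

Lemma proj_step_x_ineq tau1 xk xp v : 0 < tau1 -> (forall h, 0 <= Lquad h) ->
  is_proj (box n) (xp - tau1 *: G xp v) xk ->
  forall z, box n z ->
  L xk v + dotv (tau1^-1 *: (xp - xk)) (z - xk) - Lquad (xk - xp) <= L z v.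
Proof.
move=> tau1_gt0 Lquad_ge0 xk_proj z z_box.
have vi := is_proj_dotv_le0 (@box_segment_closed R n) xk_proj z_box.
have L_z : L xp v + dotv (G xp v) (z - xp) <= L z v.
  by rewrite -{2}(subrKC xp z) Lhat_expand lerDl.
have -> : L xk v = L xp v + dotv (G xp v) (xk - xp) + Lquad (xk - xp).
  by rewrite -Lhat_expand subrKC.
have -> : tau1^-1 *: (xp - xk) = tau1^-1 *: (xp - tau1 *: G xp v - xk) + G xp v.
  by move: (G xp v) => g; apply/matrixP => i j; rewrite !mxE; field; rewrite gt_eqF.
rewrite [dotv (_ + G xp v) _]dotvDl dotvZl.
have inv_ge0 : 0 <= tau1^-1 by rewrite invr_ge0 ltW.
have := mulr_ge0_le0 inv_ge0 vi.
move: L_z; rewrite !dotvBr; lra.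
Qed.

Lemma saddle_Phi_feasible xs ys :
  saddle (Phi Q c A b B d rho) xs ys -> box n xs /\ Yset m1 m2 ys.
Proof.
case=> le_y le_x; have := le_trans (le_y 0) (le_x 0).
rewrite /Phi (ext_indicT (@box0 R n)) (ext_indicT (@Yset0 R m1 m2)) sube0 adde0.
have [xs_box|xs_nbox] := pselect (box n xs);
  have [ys_Y|ys_nY] := pselect (Yset m1 m2 ys).
- by [].
- by rewrite (ext_indicT xs_box) (ext_indicF ys_nY) adde0 leeNy_eq.
- by rewrite (ext_indicF xs_nbox) (ext_indicT ys_Y) sube0 addey // leye_eq.
- by rewrite (ext_indicF xs_nbox) (ext_indicF ys_nY) addey // leeNy_eq.
Qed.

Lemma saddle_Phi_le xs ys : saddle (Phi Q c A b B d rho) xs ys ->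
  forall u v, box n u -> Yset m1 m2 v -> L xs v <= L u ys.
Proof.
move=> sad u v u_box v_Y; have [xs_box ys_Y] := saddle_Phi_feasible sad.
have [le_y le_x] := sad; have := le_trans (le_y v) (le_x u).
by rewrite /Phi !ext_indicT // !sube0 !adde0 lee_fin.
Qed.

End Lagrangian.

Section CouplingBound.
Context {R : realType}.

Lemma sqr_coupling_le m n (M : 'M[R]_(m, n)) s t (u : 'cV[R]_n) (v : 'cV[R]_m) :
  0 <= s -> 0 <= t -> s * t * opnorm M ^+ 2 <= 1 / 4 ->
  (s * t * dotv v (M *m u)) ^+ 2 <= s * vnorm u ^+ 2 * (t * vnorm v ^+ 2) / 4.
Proof.
move=> s_ge0 t_ge0 le_st.
have le_Mu : vnorm (M *m u) ^+ 2 <= opnorm M ^+ 2 * vnorm u ^+ 2.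
  by have := vnorm_mulmx_le M u; have := vnorm_ge0 (M *m u); rewrite -exprMn; nra.
have cs : dotv v (M *m u) ^+ 2 <= vnorm v ^+ 2 * (opnorm M ^+ 2 * vnorm u ^+ 2).
  by apply: le_trans (ler_wpM2l (sqr_ge0 _) le_Mu); rewrite !vnorm_sqr cauchy_schwarz.
have stuv_ge0 : 0 <= s * t * vnorm u ^+ 2 * vnorm v ^+ 2.
  exact: mulr_ge0 (mulr_ge0 (mulr_ge0 s_ge0 t_ge0) (sqr_ge0 _)) (sqr_ge0 _).
have := ler_wpM2l (sqr_ge0 (s * t)) cs; have := ler_wpM2r stuv_ge0 le_st.
rewrite exprMn; lra.
Qed.

End CouplingBound.

Section PDHG.
Context {R : realType}.
Variables (n m1 m2 : nat) (Q : 'M[R]_n) (c : 'cV[R]_n) (A : 'M[R]_(m1, n))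
  (b : 'cV[R]_m1) (B : 'M[R]_(m2, n)) (d : 'cV[R]_m2) (rho tau1 tau2 : R)
  (x : nat -> 'cV[R]_n) (y : nat -> 'cV[R]_(m1 + m2)).
Hypotheses (QT : Q^T = Q) (rho_ge0 : 0 <= rho).
Hypotheses (tau1_gt0 : 0 < tau1) (tau2_gt0 : 0 < tau2).
Hypothesis y_step : forall k, (1 <= k)%N ->
  is_proj (Yset m1 m2) (y k.-1 + tau2 *: (Kmat A B *m xbar x k.-1 + rvec b d)) (y k).
Hypothesis x_step : forall k, (1 <= k)%N ->
  is_proj (box n) (x k.-1 - tau1 *: gradx Q c A B rho (x k.-1) (y k)) (x k).
Hypothesis Lquad_ge0 : forall h, 0 <= Lquad Q rho h.

Local Notation L := (Lhat Q c A b B d rho).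
Local Notation K := (Kmat A B).
Local Notation yu := (yup K tau2 x y).
Local Notation rx k := (tau1^-1 *: (x k.-1 - x k)).
Local Notation ry k := (tau2^-1 *: (yu k.-1 - yu k)).
Local Notation eps k := (L (x k) (y k) - linz (fun u => L u (y k))
  (fun u => gradx Q c A B rho u (y k)) (x k) (x k.-1)).

Lemma yupE k : yu k = y k + tau2 *: (K *m (x k - x k.-1)).
Proof.
case: k => [|k]; first by rewrite /yup /= subrr mulmx0 scaler0 addr0.
rewrite /yup /xbar /=; congr (_ + _ *: (K *m _)).
by apply/matrixP => i j; rewrite !mxE; ring.
Qed.

Lemma ryE k : (1 <= k)%N -> ry k = tau2^-1 *: (y k.-1 - y k) + K *m (xbar x k.-1 - x k).
Proof.
move=> _; rewrite !yupE /xbar !(mulmxBr, mulmxDr) -!scalemxAr.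
move: (K *m x k) (K *m x k.-1) (K *m x k.-1.-1) => a1 a2 a3.
by apply/matrixP => i j; rewrite !mxE; field; rewrite gt_eqF.
Qed.

Lemma ry_subdiff k : (1 <= k)%N ->
  subdiff (fun v => (- L (x k) v)%:E + ext_indic (Yset m1 m2) v)%E (y k) (ry k).
Proof.
move=> k_gt0; have [yk_Y _] := y_step k_gt0.
apply: eps_subdiff_add_indic => // z z_Y.
have := proj_step_y_ineq Q c rho (x k) tau2_gt0 (y_step k_gt0) z_Y.
by rewrite -ryE //; lra.
Qed.

Lemma rx_eps_subdiff k : (1 <= k)%N ->
  eps_subdiff (fun u => (L u (y k))%:E + ext_indic (box n) u)%E (eps k) (x k) (rx k).
Proof.
move=> k_gt0; have [xk_box _] := x_step k_gt0.
apply: eps_subdiff_add_indic => // z z_box; rewrite (Lhat_sub_linz c A b B d rho QT).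
by have := proj_step_x_ineq b d QT tau1_gt0 Lquad_ge0 (x_step k_gt0) z_box.
Qed.

Definition energy xs ys k :=
  vnorm (xs - x k) ^+ 2 / (2 * tau1) + vnorm (ys - yu k) ^+ 2 / (2 * tau2).

Lemma energy_ge0 xs ys k : 0 <= energy xs ys k.
Proof. by rewrite addr_ge0 // divr_ge0 ?sqr_ge0 // mulr_ge0 // ltW. Qed.

Lemma energy_decrease xs ys k : (1 <= k)%N -> saddle (Phi Q c A b B d rho) xs ys ->
  tau1 * vnorm (rx k) ^+ 2 / 2 + tau2 * vnorm (ry k) ^+ 2 / 2
    - tau1 * tau2 * dotv (ry k) (K *m rx k) - eps k
  <= energy xs ys k.-1 - energy xs ys k.
Proof.
move=> k_gt0 sad; have [xs_box ys_Y] := saddle_Phi_feasible sad.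
have [xk_box _] := x_step k_gt0; have [yk_Y _] := y_step k_gt0.
have := saddle_Phi_le sad xk_box yk_Y.
have := rx_eps_subdiff k_gt0 xs; rewrite !ext_indicT // !adde0 -EFinD lee_fin.
have := ry_subdiff k_gt0 ys; rewrite !ext_indicT // !adde0 -EFinD lee_fin subr0.
have -> : ys - y k = (ys - yu k) - (tau1 * tau2) *: (K *m rx k).
  rewrite yupE -!scalemxAr !mulmxBr; move: (K *m x k) (K *m x k.-1) => a1 a2.
  by apply/matrixP => i j; rewrite !mxE; field; rewrite gt_eqF.
rewrite dotvBr dotvZr.
have := dotv_scaled_polar (yu k.-1) (yu k) ys (lt0r_neq0 tau2_gt0).
have := dotv_scaled_polar (x k.-1) (x k) xs (lt0r_neq0 tau1_gt0).
rewrite /energy; lra.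
Qed.

Lemma eps_le k : 4 * Lconst Q rho * tau1 <= 1 -> eps k <= tau1 * vnorm (rx k) ^+ 2 / 8.
Proof.
move=> le_L; rewrite (Lhat_sub_linz c A b B d rho QT).
have Q_tau1 : opnorm Q * tau1 <= 8^-1.
  by have := mulr_ge0 rho_ge0 (ltW tau1_gt0); move: le_L; rewrite /Lconst; lra.
have rx_ge0 : 0 <= tau1 * vnorm (rx k) ^+ 2 := mulr_ge0 (ltW tau1_gt0) (sqr_ge0 _).
have := ler_wpM2r rx_ge0 Q_tau1.
have -> : x k - x k.-1 = (- tau1) *: rx k.
  by apply/matrixP => i j; rewrite !mxE; field; rewrite gt_eqF.
have := Lquad_le_opnorm Q ((- tau1) *: rx k) rho_ge0.
rewrite vnormZ normrN gtr0_norm // exprMn; lra.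
Qed.

Lemma energy_decrease_bounds xs ys k : (1 <= k)%N -> saddle (Phi Q c A b B d rho) xs ys ->
  tau1 * tau2 * opnorm K ^+ 2 <= 1 / 4 -> 4 * Lconst Q rho * tau1 <= 1 ->
  let D := energy xs ys k.-1 - energy xs ys k in
  [/\ tau1 * vnorm (rx k) ^+ 2 <= 4 * D, tau2 * vnorm (ry k) ^+ 2 <= 3 * D & eps k <= D / 2].
Proof.
move=> k_gt0 sad le_K le_L D.
have le_eps := eps_le k le_L.
have [rx_le ry_le] := descent_bounds (mulr_ge0 (ltW tau1_gt0) (sqr_ge0 _))
  (mulr_ge0 (ltW tau2_gt0) (sqr_ge0 _))
  (sqr_coupling_le (rx k) (ry k) (ltW tau1_gt0) (ltW tau2_gt0) le_K)
  le_eps (energy_decrease k_gt0 sad).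
by rewrite /D; split => //; lra.
Qed.

End PDHG.

Theorem mainTheorem2 (R : realType) (n m1 m2 : nat) (Q : 'M[R]_n) (c : 'cV[R]_n)
  (A : 'M[R]_(m1, n)) (b : 'cV[R]_m1) (B : 'M[R]_(m2, n)) (d : 'cV[R]_m2)
  (rho tau1 tau2 : R) (x : nat -> 'cV[R]_n) (y : nat -> 'cV[R]_(m1 + m2))
  (xs : 'cV[R]_n) (ys : 'cV[R]_(m1 + m2)) :
  (0 < n)%N -> (0 < m1)%N -> (0 < m2)%N -> Q^T = Q -> 0 <= rho ->
  0 < tau1 -> 0 < tau2 ->
  box n (x 0%N) ->
  (forall k, (1 <= k)%N ->
     is_proj (Yset m1 m2)
       (y k.-1 + tau2 *: (Kmat A B *m xbar x k.-1 + rvec b d)) (y k)) ->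
  (forall k, (1 <= k)%N ->
     is_proj (box n)
       (x k.-1 - tau1 *: gradx Q c A B rho (x k.-1) (y k)) (x k)) ->
  (forall k, (1 <= k)%N -> convex_fun (fun u => Lhat Q c A b B d rho u (y k))) ->
  tau1 * tau2 * opnorm (Kmat A B) ^+ 2 <= 1 / 4%:R ->
  4%:R * Lconst Q rho * tau1 <= 1 ->
  saddle (Phi Q c A b B d rho) xs ys ->
  let Delta0 := vnorm (xs - x 0%N) ^+ 2 / (2%:R * tau1)
              + vnorm (ys - y 0%N) ^+ 2 / (2%:R * tau2) in
  forall N : nat, (1 <= N)%N ->
  exists k0 : nat, (1 <= k0 <= N)%N /\
    let ry := tau2^-1 *: (yup (Kmat A B) tau2 x y k0.-1 - yup (Kmat A B) tau2 x y k0) in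
    let rx := tau1^-1 *: (x k0.-1 - x k0) in
    let eps := Lhat Q c A b B d rho (x k0) (y k0)
             - linz (fun u => Lhat Q c A b B d rho u (y k0))
                    (fun u => gradx Q c A B rho u (y k0)) (x k0) (x k0.-1) in
    [/\ subdiff (fun v => ((- Lhat Q c A b B d rho (x k0) v)%:E
                            + ext_indic (Yset m1 m2) v)%E) (y k0) ry,
        eps_subdiff (fun u => ((Lhat Q c A b B d rho u (y k0))%:E
                            + ext_indic (box n) u)%E) eps (x k0) rx,
        vnorm ry <= Num.sqrt (3%:R * Delta0) / Num.sqrt (tau2 * N%:R),
        vnorm rx <= 2%:R * Num.sqrt Delta0 / Num.sqrt (tau1 * N%:R) &
        eps <= Delta0 / (2%:R * N%:R)].
Proof.
move=> _ _ _ QT rho_ge0 tau1_gt0 tau2_gt0 _ y_step x_step L_convex le_K le_L sad Delta0 N N_gt0.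
have Lquad_ge0 := Lquad_ge0_of_convex QT (L_convex 1%N isT).
have [k0 /andP[k0_gt0 k0_le] small] :=
  exists_small_decrement N_gt0 (energy_ge0 A B x y tau1_gt0 tau2_gt0 xs ys) (lexx Delta0).
have [rx_le ry_le eps_le] := energy_decrease_bounds QT rho_ge0 tau1_gt0 tau2_gt0
  y_step x_step Lquad_ge0 k0_gt0 sad le_K le_L.
have N_gt0' : 0 < N%:R :> R by rewrite ltr0n.
exists k0; split; first by rewrite k0_gt0.
move=> ry rx eps; split.
- exact: ry_subdiff.
- exact: rx_eps_subdiff.
- apply: le_sqrt_div (vnorm_ge0 _) tau2_gt0 N_gt0' _; rewrite -mulrA.
  exact: le_trans ry_le (ler_wpM2l (ler0n _ 3) small).
- have -> : 2 * Num.sqrt Delta0 = Num.sqrt (4 * Delta0).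
    have -> : 4 = 2 ^+ 2 :> R by ring.
    by rewrite sqrtrM ?sqr_ge0 // sqrtr_sqr ger0_norm.
  apply: le_sqrt_div (vnorm_ge0 _) tau1_gt0 N_gt0' _; rewrite -mulrA.
  exact: le_trans rx_le (ler_wpM2l (ler0n _ 4) small).
- by apply: le_trans eps_le _; rewrite invfM; lra.
Qed.
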